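(* Assume the structure is rigid. Fix $\zeta=(\xi,\eta)\in\Omega$ and let $Z(z,\zeta):=(y-\eta)-i(z)(x-\xi)$, $d\tilde z:=dy-i(z)\,dx$, and $j(\zeta):=\frac{2i(\zeta)+\beta(\zeta)}{\sqrt{\Delta(\zeta)}}\in A_\zeta$. Then \[ \lim_{r\to0^+}\int^{(\zeta)}_{\partial B_r(\zeta)}Z(z,\zeta)^{-1}\,d\tilde z=2\pi\,j(\zeta)\quad\text{in }A_\zeta, \] where $\partial B_r(\zeta)$ is the positively oriented circle of radius $r$.
   Context: Let $\Omega\subset\mathbb R^2$ be open with coordinates $(x,y)$, $\alpha,\beta\in C^1(\Omega,\mathbb R)$ with $\Delta:=4\alpha-\beta^2>0$ on $\Omega$. For $z\in\Omega$ let $A_z:=\mathbb R[X]/(X^2+\beta(z)X+\alpha(z))$ and $i(z)$ the class of $X$, so $i^2+\beta i+\alpha=0$ and $\{1,i(z)\}$ is a real basis; sections $h=u+v\,i$ ($u,v$ real functions) are multiplied fiberwise. The derivatives of the generator are $i_x:=-(\alpha_x+\beta_x i)(2i+\beta)^{-1}$, $i_y:=-(\alpha_y+\beta_y i)(2i+\beta)^{-1}$; the structure is rigid if $i_x+i\,i_y=0$ on $\Omega$. Coefficientwise integral into a fixed fiber: for a section $h=u+v\,i$ and a piecewise $C^1$ curve $\gamma$, using $i^2=-\beta i-\alpha$ one has $h\,d\tilde z=(u\,dy+v\alpha\,dx)+(v\,dy-u\,dx+v\beta\,dx)\,i$, and one defines \[ \int^{(\zeta)}_\gamma h\,d\tilde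 z:=\Bigl(\int_\gamma u\,dy+v\alpha\,dx\Bigr)+\Bigl(\int_\gamma v\,dy-u\,dx+v\beta\,dx\Bigr)\,i(\zeta)\in A_\zeta . \] For $z\neq\zeta$, $Z(z,\zeta)$ is invertible in $A_z$. *)

From Stdlib Require Import Reals Lra.
From Coquelicot Require Import Coquelicot.
Open Scope R_scope.

(* An element  u + v i(z)  of the fiber  A_z = R[X]/(X^2 + beta X + alpha)
   is represented by its coordinates (u, v) in the real basis {1, i(z)}.
   The fiber algebra depends only on the numbers a = alpha(z), b = beta(z). *)

(* product, using i^2 = - b i - a *)
Definition mulA (a b : R) (p q : R * R) : R * R :=
  (fst p * fst q - a * snd p * snd q,
   fst p * snd q + snd p * fst q - b * snd p * snd q).

Definition addA (p q : R * R) : R * R := (fst p + fst q, snd p + snd q).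

(* norm  (u + v i)((u - b v) - v i) = u^2 - b u v + a v^2 *)
Definition normA (a b : R) (p : R * R) : R :=
  fst p * fst p - b * fst p * snd p + a * snd p * snd p.

Definition invA (a b : R) (p : R * R) : R * R :=
  ((fst p - b * snd p) / normA a b p, - snd p / normA a b p).

Lemma mulA_invA (a b : R) (p : R * R) :
  normA a b p <> 0 -> mulA a b p (invA a b p) = (1, 0).
Proof.
  destruct p as [u v]; unfold mulA, invA, normA; simpl; intro H.
  f_equal; field; exact H.
Qed.

Definition dx (f : R -> R -> R) (x y : R) : R := Derive (fun t => f t y) x.
Definition dy (f : R -> R -> R) (x y : R) : R := Derive (fun t => f x t) y.

Definition C1_on (Omega : R * R -> Prop) (f : R -> R -> R) : Prop :=
  forall p : R * R, Omega p ->
    ex_derive (fun t => f t (snd p)) (fst p) /\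
    ex_derive (fun t => f (fst p) t) (snd p) /\
    continuous (fun q : R * R => dx f (fst q) (snd q)) p /\
    continuous (fun q : R * R => dy f (fst q) (snd q)) p.

Definition i_x (alpha beta : R -> R -> R) (x y : R) : R * R :=
  let a := alpha x y in let b := beta x y in
  mulA a b (- dx alpha x y, - dx beta x y) (invA a b (b, 2)).

Definition i_y (alpha beta : R -> R -> R) (x y : R) : R * R :=
  let a := alpha x y in let b := beta x y in
  mulA a b (- dy alpha x y, - dy beta x y) (invA a b (b, 2)).

Definition rigid (Omega : R * R -> Prop) (alpha beta : R -> R -> R) : Prop :=
  forall x y : R, Omega (x, y) ->
    addA (i_x alpha beta x y)
         (mulA (alpha x y) (beta x y) (0, 1) (i_y alpha beta x y)) = (0, 0).

Definition Zsec (xi eta x y : R) : R * R := (y - eta, - (x - xi)).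

Definition Zinv (alpha beta : R -> R -> R) (xi eta x y : R) : R * R :=
  invA (alpha x y) (beta x y) (Zsec xi eta x y).

(* Coefficientwise integral into the fiber A_zeta of a section
   h = u + v i over the positively oriented circle of radius r centred
   at (xi, eta), parametrised by t |-> (xi + r cos t, eta + r sin t),
   t in [0, 2 pi]:
     ( \int u dy + v alpha dx ,  \int v dy - u dx + v beta dx ),
   the pair being the coordinates in the basis {1, i(zeta)}. *)
Definition circle_int (alpha beta : R -> R -> R) (h : R -> R -> R * R)
    (xi eta r : R) : R * R :=
  let X t := xi + r * cos t in
  let Y t := eta + r * sin t in
  let DX t := - (r * sin t) in
  let DY t := r * cos t in
  (RInt (fun t => fst (h (X t) (Y t)) * DY t
                  + snd (h (X t) (Y t)) * alpha (X t) (Y t) * DX t) 0 (2 * PI),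
   RInt (fun t => snd (h (X t) (Y t)) * DY t
                  - fst (h (X t) (Y t)) * DX t
                  + snd (h (X t) (Y t)) * beta (X t) (Y t) * DX t) 0 (2 * PI)).

Definition jA (alpha beta : R -> R -> R) (xi eta : R) : R * R :=
  let D := 4 * alpha xi eta - (beta xi eta) ^ 2 in
  (beta xi eta / sqrt D, 2 / sqrt D).

(* On the circle z = zeta + r e^{it}, both Z(z,zeta) and dz~ carry a factor r, which
   cancels: the coordinates of Z^{-1} dz~ are k1(alpha(z), beta(z), t) dt and
   k2(alpha(z), beta(z), t) dt for two rational functions of (sin t, cos t) whose common
   denominator is n(a, b, t) = sin^2 t + b sin t cos t + a cos^2 t >= Delta / (4 (1 + a)).
   Hence k1, k2 are locally Lipschitz in (a, b) uniformly in t, and as r -> 0 the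
   integrals converge to those with alpha, beta frozen at zeta.  These are explicit:
   n = |p + i q|^2 for p = sin t + (b/2) cos t, q = -(sqrt Delta / 2) cos t, whose
   Wronskian p q' - q p' is the constant sqrt Delta / 2, so the integral of k2 = 1/n is
   (2 / sqrt Delta) times the total angle 2 pi swept by p + i q; and k1 is half the
   logarithmic derivative of n plus b/2 times k2. *)

From Stdlib Require Import Reals Lra.
From Coquelicot Require Import Coquelicot.
Open Scope R_scope.

Lemma continuous_locally_bounded (g : R * R -> R) (p : R * R) :
  continuous g p -> locally p (fun q => Rabs (g q) <= Rabs (g p) + 1).
Proof.
  intros Hg. apply (Hg (fun y => Rabs y <= Rabs (g p) + 1)).
  exists (mkposreal 1 Rlt_0_1). intros y Hy. change (Rabs (y - g p) < 1) in Hy.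
  pose proof (Rabs_triang_inv y (g p)). lra.
Qed.

Lemma C1_on_locally_lipschitz (Omega : R * R -> Prop) (f : R -> R -> R) (x0 y0 : R) :
  open Omega -> C1_on Omega f -> Omega (x0, y0) ->
  exists (d : posreal) (M : R), forall x y, Rabs (x - x0) < d -> Rabs (y - y0) < d ->
    Omega (x, y) /\ Rabs (f x y - f x0 y0) <= M * (Rabs (x - x0) + Rabs (y - y0)).
Proof.
  intros HO Hf Hp.
  destruct (Hf _ Hp) as (_ & _ & Hdx & Hdy).
  set (Mx := Rabs (dx f x0 y0) + 1). set (My := Rabs (dy f x0 y0) + 1).
  destruct (filter_and _ _ (HO _ Hp)
              (filter_and _ _ (continuous_locally_bounded _ _ Hdx)
                              (continuous_locally_bounded _ _ Hdy))) as [d Hd].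
  exists d, (Rmax Mx My). intros x y Hx Hy.
  assert (Hbox : forall u v, Rabs (u - x0) < d -> Rabs (v - y0) < d ->
    Omega (u, v) /\ Rabs (dx f u v) <= Mx /\ Rabs (dy f u v) <= My)
    by (intros u v Hu Hv; exact (Hd (u, v) (conj Hu Hv))).
  split; [apply Hbox; assumption|].
  assert (Hhor : Rabs (f x y - f x0 y) <= Mx * Rabs (x - x0)).
  { apply (bounded_variation (fun u => f u y) (fun u => dx f u y) Mx x0 x); intros u Hu.
    destruct (Hbox u y) as (HOu & Hbu & _); [lra|assumption|].
    split; [apply Derive_correct, (Hf _ HOu)|exact Hbu]. }
  assert (Hver : Rabs (f x0 y - f x0 y0) <= My * Rabs (y - y0)).
  { apply (bounded_variation (fun v => f x0 v) (fun v => dy f x0 v) My y0 y); intros v Hv.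
    destruct (Hbox x0 v) as (HOv & _ & Hbv); [rewrite Rminus_diag, Rabs_R0; apply cond_pos|lra|].
    split; [apply Derive_correct, (Hf _ HOv)|exact Hbv]. }
  replace (f x y - f x0 y0) with ((f x y - f x0 y) + (f x0 y - f x0 y0)) by ring.
  pose proof (Rmax_l Mx My); pose proof (Rmax_r Mx My).
  pose proof (Rabs_pos (x - x0)); pose proof (Rabs_pos (y - y0)).
  eapply Rle_trans; [apply Rabs_triang|]. nra.
Qed.

Lemma C1_on_continuous (Omega : R * R -> Prop) (f : R -> R -> R) (p : R * R) :
  open Omega -> C1_on Omega f -> Omega p ->
  continuous (fun q : R * R => f (fst q) (snd q)) p.
Proof.
  destruct p as [x0 y0]. intros HO Hf Hp.
  destruct (C1_on_locally_lipschitz Omega f x0 y0 HO Hf Hp) as (d & M & Hlip).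
  apply filterlim_locally. intros eps.
  assert (Heps := cond_pos eps).
  set (M' := Rabs M + 1).
  assert (Hd' : 0 < Rmin d (eps / (2 * M'))).
  { apply Rmin_glb_lt; [apply cond_pos|]. unfold M'. pose proof (Rabs_pos M).
    apply Rdiv_lt_0_compat; lra. }
  exists (mkposreal _ Hd'). intros [x y] [Hx Hy]. simpl in Hx, Hy |- *.
  change (Rabs (x - x0) < Rmin d (eps / (2 * M'))) in Hx.
  change (Rabs (y - y0) < Rmin d (eps / (2 * M'))) in Hy.
  change (Rabs (f x y - f x0 y0) < eps).
  pose proof (Rmin_l d (eps / (2 * M'))). pose proof (Rmin_r d (eps / (2 * M'))).
  destruct (Hlip x y) as [_ Hb]; [lra|lra|].
  assert (HM : M <= M') by (unfold M'; pose proof (Rle_abs M); lra).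
  assert (HM' : 0 < M') by (unfold M'; pose proof (Rabs_pos M); lra).
  assert (Hsmall : M' * (Rabs (x - x0) + Rabs (y - y0)) < eps).
  { apply Rlt_le_trans with (M' * (2 * (eps / (2 * M')))).
    - apply Rmult_lt_compat_l; lra.
    - right. field. lra. }
  pose proof (Rabs_pos (x - x0)); pose proof (Rabs_pos (y - y0)). nra.
Qed.

(* [kernel1 a b t], [kernel2 a b t] are the coordinates in the basis {1, i} of
   Z^{-1} dz~ / dt on a circle of any radius, at a point where alpha = a and beta = b. *)
Definition unit_norm (a b t : R) : R := normA a b (sin t, - cos t).

Definition kernel1 (a b t : R) : R :=
  (sin t * cos t + b * cos t ^ 2 - a * sin t * cos t) / unit_norm a b t.

Definition kernel2 (a b t : R) : R := / unit_norm a b t.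

Lemma sin_cos_sq (t : R) : sin t ^ 2 + cos t ^ 2 = 1.
Proof. rewrite <- (sin2_cos2 t). unfold Rsqr. ring. Qed.

Lemma Zinv_circle_coords (a b xi eta r t : R) : r <> 0 ->
  let z := invA a b (Zsec xi eta (xi + r * cos t) (eta + r * sin t)) in
  fst z * (r * cos t) + snd z * a * - (r * sin t) = kernel1 a b t /\
  snd z * (r * cos t) - fst z * - (r * sin t) + snd z * b * - (r * sin t) = kernel2 a b t.
Proof.
  intros Hr z.
  assert (Hnorm : normA a b (Zsec xi eta (xi + r * cos t) (eta + r * sin t))
                  = r ^ 2 * unit_norm a b t)
    by (unfold unit_norm, normA, Zsec; simpl; ring).
  unfold z, invA, kernel1, kernel2. rewrite Hnorm. unfold Zsec; simpl.
  (* where unit_norm vanishes both sides are 0, since x / 0 = 0 *)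
  destruct (Req_dec (unit_norm a b t) 0) as [H0|H0].
  - rewrite H0, Rmult_0_r. unfold Rdiv. rewrite Rinv_0. split; ring.
  - split; [field; auto|].
    replace (/ unit_norm a b t) with ((sin t ^ 2 + cos t ^ 2) / unit_norm a b t)
      by (rewrite sin_cos_sq; field; auto).
    field; auto.
Qed.

Lemma circle_int_Zinv (alpha beta : R -> R -> R) (xi eta r : R) : r <> 0 ->
  circle_int alpha beta (Zinv alpha beta xi eta) xi eta r =
  (RInt (fun t => kernel1 (alpha (xi + r * cos t) (eta + r * sin t))
                          (beta (xi + r * cos t) (eta + r * sin t)) t) 0 (2 * PI),
   RInt (fun t => kernel2 (alpha (xi + r * cos t) (eta + r * sin t))
                          (beta (xi + r * cos t) (eta + r * sin t)) t) 0 (2 * PI)).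
Proof.
  intros Hr. unfold circle_int, Zinv.
  f_equal; apply RInt_ext; intros t _; apply (Zinv_circle_coords _ _ xi eta r t Hr).
Qed.

(* The argument of p + i q in (-pi, pi), smooth away from the half-line q = 0, p <= 0. *)
Definition half_angle (p q : R) : R := 2 * atan (q / (p + sqrt (p ^ 2 + q ^ 2))).

Lemma is_derive_half_angle (p q : R -> R) (t dp dq : R) :
  is_derive p t dp -> is_derive q t dq -> q t <> 0 \/ 0 < p t ->
  is_derive (fun s => half_angle (p s) (q s)) t
    ((p t * dq - q t * dp) / (p t ^ 2 + q t ^ 2)).
Proof.
  intros Hp Hq Hcut. unfold half_angle.
  assert (HS : 0 < p t ^ 2 + q t ^ 2) by (destruct Hcut; nra).
  assert (E : p t * (p t * 1) + q t * (q t * 1) = p t ^ 2 + q t ^ 2) by ring.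
  assert (Hr0 := sqrt_lt_R0 _ HS).
  assert (Hr2 := sqrt_sqrt _ (Rlt_le _ _ HS)).
  set (r := sqrt (p t ^ 2 + q t ^ 2)) in *.
  assert (Hpr : 0 < p t + r).
  { destruct Hcut as [H|H]; [|lra].
    destruct (Rle_lt_dec (p t) 0); [|lra].
    assert (p t * p t < r * r) by nra. nra. }
  auto_derive.
  - rewrite E. fold r. repeat split; try (eexists; eassumption); lra.
  - replace (Derive (fun s => p s) t) with dp by (symmetry; apply is_derive_unique, Hp).
    replace (Derive (fun s => q s) t) with dq by (symmetry; apply is_derive_unique, Hq).
    rewrite E. fold r.
    set (P := p t) in *. set (Q := q t) in *.
    field_simplify; [| nra | repeat split; nra].
    replace (Q ^ 2) with (r ^ 2 - P ^ 2) by nra.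
    field. split; [nra|].
    replace (P ^ 2 * r + 2 * P * r ^ 2 + r ^ 3 + r * (r ^ 2 - P ^ 2))
      with (2 * r * r * (P + r)) by ring.
    apply Rmult_integral_contrapositive; split; [nra|lra].
Qed.

Lemma half_angle_antipodal (c k : R) : 0 < k -> half_angle (- c) k - half_angle c (- k) = PI.
Proof.
  intros Hk. unfold half_angle.
  replace ((- c) ^ 2) with (c ^ 2) by ring. replace ((- k) ^ 2) with (k ^ 2) by ring.
  assert (HS : 0 < c ^ 2 + k ^ 2) by nra.
  assert (Hs2 := sqrt_sqrt _ (Rlt_le _ _ HS)).
  assert (Hs0 := sqrt_lt_R0 _ HS).
  set (s := sqrt (c ^ 2 + k ^ 2)) in *.
  assert (H1 : 0 < c + s) by nra.
  assert (H2 : 0 < - c + s) by nra.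
  assert (Hv : 0 < k / (c + s)) by (apply Rdiv_lt_0_compat; lra).
  replace (k / (- c + s)) with (/ (k / (c + s)))
    by (field_simplify_eq; [nra | repeat split; lra]).
  replace (- k / (c + s)) with (- (k / (c + s))) by (field; lra).
  rewrite atan_inv, atan_opp by exact Hv. field.
Qed.

Lemma is_RInt_angle_form (p q dp dq w : R -> R) (u v : R) :
  u <= v ->
  (forall t, is_derive p t (dp t)) -> (forall t, is_derive q t (dq t)) ->
  (forall t, u <= t <= v -> q t <> 0 \/ 0 < p t) ->
  (forall t, w t = (p t * dq t - q t * dp t) / (p t ^ 2 + q t ^ 2)) ->
  (forall t, continuous w t) ->
  is_RInt w u v (half_angle (p v) (q v) - half_angle (p u) (q u)).
Proof.
  intros Huv Hp Hq Hcut Hw Hcw.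
  apply (is_RInt_derive (fun t => half_angle (p t) (q t))); intros t Ht.
  - rewrite Rmin_left, Rmax_right in Ht by lra.
    rewrite Hw. apply is_derive_half_angle; auto.
  - apply Hcw.
Qed.

Lemma unit_norm_ge (a b t : R) :
  0 < 4 * a - b ^ 2 -> (4 * a - b ^ 2) / (4 * (1 + a)) <= unit_norm a b t.
Proof.
  intros HD. assert (Ha : 0 < 1 + a) by nra.
  assert (Id : (1 + a) * unit_norm a b t - (a - b ^ 2 / 4) * (sin t ^ 2 + cos t ^ 2) =
     (sin t + b / 2 * cos t) ^ 2 + (b / 2 * sin t + a * cos t) ^ 2)
    by (unfold unit_norm, normA; simpl; field).
  rewrite sin_cos_sq in Id.
  pose proof (pow2_ge_0 (sin t + b / 2 * cos t)).
  pose proof (pow2_ge_0 (b / 2 * sin t + a * cos t)).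
  apply Rle_div_l; lra.
Qed.

Lemma unit_norm_pos (a b t : R) : 0 < 4 * a - b ^ 2 -> 0 < unit_norm a b t.
Proof.
  intros HD. eapply Rlt_le_trans; [|apply unit_norm_ge, HD].
  apply Rdiv_lt_0_compat; nra.
Qed.

Lemma continuous_unit_norm_const_div (a b c t : R) :
  0 < 4 * a - b ^ 2 -> continuous (fun s => c / unit_norm a b s) t.
Proof.
  intros HD. apply (ex_derive_continuous (K := R_AbsRing) (V := R_NormedModule)).
  assert (HN := unit_norm_pos a b t HD). unfold unit_norm, normA in *; simpl in *.
  auto_derive. lra.
Qed.

Lemma is_RInt_unit_norm_half (a b : R) : 0 < 4 * a - b ^ 2 ->
  is_RInt (fun t => sqrt (4 * a - b ^ 2) / 2 / unit_norm a b t) 0 PI PI.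
Proof.
  intros HD.
  set (k := sqrt (4 * a - b ^ 2) / 2).
  assert (Hk2 : k ^ 2 = (4 * a - b ^ 2) / 4).
  { unfold k. pose proof (sqrt_sqrt (4 * a - b ^ 2) (Rlt_le _ _ HD)). nra. }
  assert (Hk : 0 < k) by (unfold k; apply Rdiv_lt_0_compat; [apply sqrt_lt_R0|]; lra).
  assert (Hsq : forall t, unit_norm a b t = (sin t + b / 2 * cos t) ^ 2 + (- (k * cos t)) ^ 2).
  { intros t. replace ((- (k * cos t)) ^ 2) with (k ^ 2 * cos t ^ 2) by ring.
    rewrite Hk2. unfold unit_norm, normA; simpl. field. }
  pose proof (is_RInt_angle_form (fun t => sin t + b / 2 * cos t) (fun t => - (k * cos t))
    (fun t => cos t - b / 2 * sin t) (fun t => k * sin t) (fun t => k / unit_norm a b t)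
    0 PI (Rlt_le _ _ PI_RGT_0)) as H.
  cbv beta in H. rewrite sin_PI, cos_PI, sin_0, cos_0 in H.
  replace (0 + b / 2 * -1) with (- (b / 2)) in H by ring.
  replace (- (k * -1)) with k in H by ring.
  replace (0 + b / 2 * 1) with (b / 2) in H by ring.
  replace (- (k * 1)) with (- k) in H by ring.
  rewrite half_angle_antipodal in H by exact Hk.
  apply H.
  - intros t. auto_derive; auto; ring.
  - intros t. auto_derive; auto; ring.
  - intros t Ht. destruct (Req_dec (cos t) 0) as [Hc|Hc]; [right|left].
    + pose proof (sin_ge_0 t (proj1 Ht) (proj2 Ht)). pose proof (sin_cos_sq t).
      rewrite Hc in *. nra.
    + intros Hq. apply Hc. nra.
  - intros t. rewrite Hsq. f_equal. pose proof (sin_cos_sq t). nra.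
  - intros t. apply continuous_unit_norm_const_div, HD.
Qed.

Lemma unit_norm_add_PI (a b t : R) : unit_norm a b (t + PI) = unit_norm a b t.
Proof. unfold unit_norm, normA; simpl. rewrite neg_sin, neg_cos. ring. Qed.

Lemma is_RInt_kernel2 (a b : R) : 0 < 4 * a - b ^ 2 ->
  is_RInt (kernel2 a b) 0 (2 * PI) (2 * PI * (2 / sqrt (4 * a - b ^ 2))).
Proof.
  intros HD.
  set (k := sqrt (4 * a - b ^ 2) / 2).
  assert (Hk : 0 < k) by (unfold k; apply Rdiv_lt_0_compat; [apply sqrt_lt_R0|]; lra).
  pose proof (is_RInt_unit_norm_half a b HD) as Hhalf. fold k in Hhalf.
  assert (Hshift : is_RInt (fun t => k / unit_norm a b t) PI (2 * PI) PI).
  { assert (H := is_RInt_comp_lin (fun t => k / unit_norm a b t) 1 (- PI) PI (2 * PI) PI).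
    replace (1 * PI + - PI) with 0 in H by ring.
    replace (1 * (2 * PI) + - PI) with PI in H by ring.
    eapply is_RInt_ext; [|exact (H Hhalf)]. intros t _.
    unfold scal; simpl; unfold mult; simpl.
    replace (1 * t + - PI) with (t - PI) by ring.
    rewrite <- (unit_norm_add_PI a b (t - PI)). replace (t - PI + PI) with t by ring. ring. }
  assert (Hfull := is_RInt_Chasles _ 0 PI (2 * PI) _ _ Hhalf Hshift).
  assert (H := is_RInt_scal _ 0 (2 * PI) (/ k) _ Hfull).
  replace (2 * PI * (2 / sqrt (4 * a - b ^ 2))) with (scal (/ k) (plus PI PI))
    by (unfold scal, plus, k; simpl; unfold mult; simpl; field;
        apply Rgt_not_eq, sqrt_lt_R0, HD).
  eapply is_RInt_ext; [|exact H]. intros t _.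
  unfold scal, kernel2; simpl; unfold mult; simpl.
  pose proof (unit_norm_pos a b t HD). field. lra.
Qed.

Lemma is_RInt_unit_norm_log_deriv (a b : R) : 0 < 4 * a - b ^ 2 ->
  is_RInt (fun t => (2 * sin t * cos t + b * (cos t ^ 2 - sin t ^ 2) - 2 * a * sin t * cos t)
                    / unit_norm a b t) 0 (2 * PI) 0.
Proof.
  intros HD.
  assert (Hperiod : unit_norm a b (2 * PI) = unit_norm a b 0)
    by (unfold unit_norm; rewrite sin_2PI, cos_2PI, sin_0, cos_0; reflexivity).
  assert (H : is_RInt (fun t => (2 * sin t * cos t + b * (cos t ^ 2 - sin t ^ 2)
                                 - 2 * a * sin t * cos t) / unit_norm a b t) 0 (2 * PI)
                (minus (ln (unit_norm a b (2 * PI))) (ln (unit_norm a b 0)))).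
  { apply (is_RInt_derive (fun t => ln (unit_norm a b t))); intros t _.
    - assert (HN := unit_norm_pos a b t HD). unfold unit_norm, normA in *; simpl in *.
      auto_derive; [lra|]. field. lra.
    - apply (ex_derive_continuous (K := R_AbsRing) (V := R_NormedModule)).
      assert (HN := unit_norm_pos a b t HD). unfold unit_norm, normA in *; simpl in *.
      auto_derive. lra. }
  rewrite Hperiod, minus_eq_zero in H. exact H.
Qed.

Lemma is_RInt_kernel1 (a b : R) : 0 < 4 * a - b ^ 2 ->
  is_RInt (kernel1 a b) 0 (2 * PI) (2 * PI * (b / sqrt (4 * a - b ^ 2))).
Proof.
  intros HD.
  assert (Hs : 0 < sqrt (4 * a - b ^ 2)) by (apply sqrt_lt_R0, HD).
  (* kernel1 = (1/2) unit_norm' / unit_norm + (b/2) kernel2 *)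
  assert (H := is_RInt_plus _ _ 0 (2 * PI) _ _
     (is_RInt_scal _ 0 (2 * PI) (1 / 2) _ (is_RInt_unit_norm_log_deriv a b HD))
     (is_RInt_scal _ 0 (2 * PI) (b / 2) _ (is_RInt_kernel2 a b HD))).
  replace (2 * PI * (b / sqrt (4 * a - b ^ 2)))
    with (plus (scal (1 / 2) 0) (scal (b / 2) (2 * PI * (2 / sqrt (4 * a - b ^ 2)))))
    by (unfold plus, scal; simpl; unfold mult; simpl; field; apply Rgt_not_eq, Hs).
  eapply is_RInt_ext; [|exact H]. intros t _.
  unfold plus, scal; simpl; unfold mult; simpl. unfold kernel1, kernel2.
  assert (HN := unit_norm_pos a b t HD).
  assert (Hb : b * (sin t ^ 2 + cos t ^ 2) = b) by (rewrite sin_cos_sq; ring).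
  field_simplify_eq; [lra|lra].
Qed.

Lemma Rabs_lin2_le (x y u v : R) :
  Rabs u <= 1 -> Rabs v <= 1 -> Rabs (x * u + y * v) <= Rabs x + Rabs y.
Proof.
  intros Hu Hv. eapply Rle_trans; [apply Rabs_triang|]. rewrite 2!Rabs_mult.
  pose proof (Rabs_pos x). pose proof (Rabs_pos y). nra.
Qed.

Lemma Rabs_div_sub_le (P N P0 N0 d K m : R) :
  0 < m -> m <= N0 -> m / 2 <= N -> Rabs N0 <= K -> Rabs P0 <= K ->
  Rabs (P - P0) <= d -> Rabs (N - N0) <= d -> Rabs (P / N - P0 / N0) <= 4 * K / (m * m) * d.
Proof.
  intros Hm HN0 HN HKN HKP HP HNd.
  replace (P / N - P0 / N0) with (((P - P0) * N0 - P0 * (N - N0)) / (N * N0)) by (field; lra).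
  assert (Hnum : Rabs ((P - P0) * N0 - P0 * (N - N0)) <= 2 * K * d).
  { unfold Rminus at 1. eapply Rle_trans; [apply Rabs_triang|].
    rewrite Rabs_Ropp, 2!Rabs_mult.
    pose proof (Rabs_pos (P - P0)). pose proof (Rabs_pos (N - N0)).
    pose proof (Rabs_pos N0). pose proof (Rabs_pos P0). nra. }
  assert (Hden : m * m / 2 <= N * N0) by nra.
  unfold Rdiv. rewrite Rabs_mult, Rabs_inv, (Rabs_right (N * N0)) by nra.
  apply Rle_trans with (2 * K * d * / (m * m / 2)).
  - apply Rmult_le_compat; try lra.
    + apply Rabs_pos.
    + apply Rlt_le, Rinv_0_lt_compat. nra.
    + apply Rinv_le_contravar; nra.
  - right. field. lra.
Qed.

Lemma kernel_locally_lipschitz (a0 b0 : R) : 0 < 4 * a0 - b0 ^ 2 ->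
  exists d C : R, 0 < d /\ 0 < C /\ forall a b t : R, Rabs (a - a0) + Rabs (b - b0) <= d ->
    0 < unit_norm a b t /\
    Rabs (kernel1 a b t - kernel1 a0 b0 t) <= C * (Rabs (a - a0) + Rabs (b - b0)) /\
    Rabs (kernel2 a b t - kernel2 a0 b0 t) <= C * (Rabs (a - a0) + Rabs (b - b0)).
Proof.
  intros HD.
  set (m := (4 * a0 - b0 ^ 2) / (4 * (1 + a0))).
  set (K := 1 + Rabs a0 + Rabs b0).
  assert (Hm : 0 < m) by (unfold m; apply Rdiv_lt_0_compat; nra).
  assert (HK1 : 1 <= K) by (unfold K; pose proof (Rabs_pos a0); pose proof (Rabs_pos b0); lra).
  exists (m / 2), (4 * K / (m * m)). split; [lra|]. split.
  { apply Rdiv_lt_0_compat; nra. }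
  intros a b t Hd. set (dist := Rabs (a - a0) + Rabs (b - b0)) in *.
  assert (Hs : Rabs (sin t) <= 1) by (apply Rabs_le, SIN_bound).
  assert (Hc : Rabs (cos t) <= 1) by (apply Rabs_le, COS_bound).
  assert (Hprod : forall u v, Rabs u <= 1 -> Rabs v <= 1 -> Rabs (u * v) <= 1).
  { intros u v Hu Hv. rewrite Rabs_mult.
    pose proof (Rabs_pos u). pose proof (Rabs_pos v). nra. }
  assert (Hsc := Hprod _ _ Hs Hc). assert (Hcc := Hprod _ _ Hc Hc).
  assert (Hss := Hprod _ _ Hs Hs).
  set (P := fun a b => sin t * cos t + b * cos t ^ 2 - a * sin t * cos t).
  assert (HdN : Rabs (unit_norm a b t - unit_norm a0 b0 t) <= dist).
  { replace (unit_norm a b t - unit_norm a0 b0 t)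
      with ((a - a0) * (cos t * cos t) + (b - b0) * (sin t * cos t))
      by (unfold unit_norm, normA; simpl; ring).
    apply Rabs_lin2_le; assumption. }
  assert (HdP : Rabs (P a b - P a0 b0) <= dist).
  { replace (P a b - P a0 b0) with ((a - a0) * - (sin t * cos t) + (b - b0) * (cos t * cos t))
      by (unfold P; ring).
    apply Rabs_lin2_le; [rewrite Rabs_Ropp|]; assumption. }
  assert (HKN : Rabs (unit_norm a0 b0 t) <= K).
  { replace (unit_norm a0 b0 t) with (sin t * sin t + (a0 * (cos t * cos t) + b0 * (sin t * cos t)))
      by (unfold unit_norm, normA; simpl; ring).
    eapply Rle_trans; [apply Rabs_triang|].
    pose proof (Rabs_lin2_le a0 b0 _ _ Hcc Hsc). unfold K. lra. }
  assert (HKP : Rabs (P a0 b0) <= K).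
  { replace (P a0 b0) with (sin t * cos t + (a0 * - (sin t * cos t) + b0 * (cos t * cos t)))
      by (unfold P; ring).
    eapply Rle_trans; [apply Rabs_triang|].
    assert (Hmsc : Rabs (- (sin t * cos t)) <= 1) by (rewrite Rabs_Ropp; exact Hsc).
    pose proof (Rabs_lin2_le a0 b0 _ _ Hmsc Hcc). unfold K. lra. }
  assert (HN0 : m <= unit_norm a0 b0 t) by (apply unit_norm_ge, HD).
  assert (HN : m / 2 <= unit_norm a b t).
  { pose proof (Rle_abs (unit_norm a0 b0 t - unit_norm a b t)).
    rewrite Rabs_minus_sym in HdN. lra. }
  split; [lra|split].
  - apply Rabs_div_sub_le; assumption.
  - unfold kernel2. rewrite <- (Rdiv_1_l (unit_norm a b t)), <- (Rdiv_1_l (unit_norm a0 b0 t)).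
    apply Rabs_div_sub_le; try assumption; rewrite ?Rminus_diag, ?Rabs_R1, ?Rabs_R0; try lra.
    unfold dist. pose proof (Rabs_pos (a - a0)). pose proof (Rabs_pos (b - b0)). lra.
Qed.

Lemma filterlim_RInt_uniform {T : Type} (F : (T -> Prop) -> Prop) {FF : Filter F}
    (g : T -> R -> R) (g0 : R -> R) (a b l : R) :
  a <= b -> is_RInt g0 a b l ->
  F (fun x => ex_RInt (g x) a b) ->
  (forall eps : posreal, F (fun x => forall t, a <= t <= b -> Rabs (g x t - g0 t) <= eps)) ->
  filterlim (fun x => RInt (g x) a b) F (locally l).
Proof.
  intros Hab Hg0 Hint Hunif.
  apply filterlim_locally. intros eps.
  assert (Heps' : 0 < eps / (b - a + 1)) by (apply Rdiv_lt_0_compat; [apply cond_pos|lra]).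
  generalize (filter_and _ _ Hint (Hunif (mkposreal _ Heps'))).
  apply filter_imp. intros x [Hx Hclose]. simpl in Hclose.
  change (Rabs (RInt (g x) a b - l) < eps).
  rewrite <- (is_RInt_unique _ _ _ _ Hg0).
  assert (Hdiff := RInt_minus (V := R_CompleteNormedModule) _ _ a b Hx (ex_intro _ _ Hg0)).
  change (RInt (fun t => g x t - g0 t) a b = RInt (g x) a b - RInt g0 a b) in Hdiff.
  rewrite <- Hdiff.
  eapply Rle_lt_trans.
  - apply abs_RInt_le_const; [exact Hab| |exact Hclose].
    apply (ex_RInt_minus (V := R_NormedModule)); [exact Hx|exists l; exact Hg0].
  - assert (H := cond_pos eps).
    apply Rlt_le_trans with ((b - a + 1) * (eps / (b - a + 1))).
    + apply Rmult_lt_compat_r; lra.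
    + right. field. lra.
Qed.

Lemma filterlim_locally_pair {T : Type} (F : (T -> Prop) -> Prop) {FF : Filter F}
    (f g : T -> R) (l1 l2 : R) :
  filterlim f F (locally l1) -> filterlim g F (locally l2) ->
  filterlim (fun x => (f x, g x)) F (locally (l1, l2)).
Proof.
  intros Hf Hg. apply filterlim_locally. intros eps.
  exact (filter_and _ _ (proj1 (filterlim_locally f l1) Hf eps)
                        (proj1 (filterlim_locally g l2) Hg eps)).
Qed.

Lemma locally_small_circles (P : R * R -> Prop) (x0 y0 : R) :
  locally (x0, y0) P -> locally 0 (fun r => forall t, P (x0 + r * cos t, y0 + r * sin t)).
Proof.
  intros [d Hd]. exists d. intros r Hr t. apply Hd.
  change (Rabs (r - 0) < d) in Hr. rewrite Rminus_0_r in Hr.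
  pose proof (Rabs_pos r).
  assert (Rabs (cos t) <= 1) by (apply Rabs_le, COS_bound).
  assert (Rabs (sin t) <= 1) by (apply Rabs_le, SIN_bound).
  split; [change (Rabs (x0 + r * cos t - x0) < d) | change (Rabs (y0 + r * sin t - y0) < d)];
    rewrite Rplus_minus_l, Rabs_mult; nra.
Qed.

Ltac solve_continuous :=
  repeat match goal with
  | |- continuous (fun s => @?f s + @?g s) _ => apply (continuous_plus (V := R_NormedModule) f g)
  | |- continuous (fun s => @?f s - @?g s) _ => apply (continuous_minus (V := R_NormedModule) f g)
  | |- continuous (fun s => @?f s * @?g s) _ => apply (continuous_mult (K := R_AbsRing) f g)
  | |- continuous (fun s => - @?f s) _ => apply (continuous_opp (V := R_NormedModule) f)
  | |- continuous (fun s => sin s) _ => apply continuous_sin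
  | |- continuous (fun s => cos s) _ => apply continuous_cos
  | |- continuous (fun _ => ?c) _ => apply continuous_const
  end.

Lemma continuous_along_circle (f : R -> R -> R) (x0 y0 r t : R) :
  continuous (fun q : R * R => f (fst q) (snd q)) (x0 + r * cos t, y0 + r * sin t) ->
  continuous (fun s => f (x0 + r * cos s) (y0 + r * sin s)) t.
Proof.
  intros Hf.
  apply (continuous_comp_2 (fun s => x0 + r * cos s) (fun s => y0 + r * sin s) f);
    [solve_continuous..|exact Hf].
Qed.

Lemma continuous_kernels (A B : R -> R) (t : R) :
  continuous A t -> continuous B t -> unit_norm (A t) (B t) t <> 0 ->
  continuous (fun s => kernel1 (A s) (B s) s) t /\ continuous (fun s => kernel2 (A s) (B s) s) t.
Proof.
  intros HA HB HN.
  assert (Hinv : continuous (fun s => / unit_norm (A s) (B s) s) t).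
  { apply continuous_Rinv_comp; [|exact HN]. unfold unit_norm, normA; simpl.
    solve_continuous; assumption. }
  split; [|exact Hinv].
  unfold kernel1, Rdiv.
  apply (continuous_mult (K := R_AbsRing) (fun s => _) (fun s => / unit_norm (A s) (B s) s));
    [|exact Hinv].
  simpl. solve_continuous; assumption.
Qed.

Lemma filterlim_RInt_kernels {T : Type} (F : (T -> Prop) -> Prop) {FF : Filter F}
    (A B : T -> R -> R) (a0 b0 : R) :
  0 < 4 * a0 - b0 ^ 2 ->
  (forall eps : posreal, F (fun x => forall t, Rabs (A x t - a0) + Rabs (B x t - b0) < eps)) ->
  F (fun x => forall t, continuous (A x) t /\ continuous (B x) t) ->
  filterlim (fun x => RInt (fun t => kernel1 (A x t) (B x t) t) 0 (2 * PI)) F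
    (locally (2 * PI * (b0 / sqrt (4 * a0 - b0 ^ 2)))) /\
  filterlim (fun x => RInt (fun t => kernel2 (A x t) (B x t) t) 0 (2 * PI)) F
    (locally (2 * PI * (2 / sqrt (4 * a0 - b0 ^ 2)))).
Proof.
  intros HD Hnear Hcont.
  destruct (kernel_locally_lipschitz a0 b0 HD) as (d & C & Hd & HC & Hlip).
  assert (H2PI : 0 <= 2 * PI) by (pose proof PI_RGT_0; lra).
  assert (Hint : F (fun x => ex_RInt (fun t => kernel1 (A x t) (B x t) t) 0 (2 * PI) /\
                             ex_RInt (fun t => kernel2 (A x t) (B x t) t) 0 (2 * PI))).
  { generalize (filter_and _ _ (Hnear (mkposreal d Hd)) Hcont). apply filter_imp.
    intros x [Hx Hc]. simpl in Hx.
    assert (Hk : forall t, continuous (fun s => kernel1 (A x s) (B x s) s) t /\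
                           continuous (fun s => kernel2 (A x s) (B x s) s) t).
    { intros t. destruct (Hc t) as [HA HB].
      destruct (Hlip (A x t) (B x t) t (Rlt_le _ _ (Hx t))) as [HN _].
      apply continuous_kernels; [exact HA|exact HB|lra]. }
    split; apply (ex_RInt_continuous (V := R_CompleteNormedModule)); intros t _; apply Hk. }
  assert (Hclose : forall eps : posreal, F (fun x => forall t,
            Rabs (kernel1 (A x t) (B x t) t - kernel1 a0 b0 t) <= eps /\
            Rabs (kernel2 (A x t) (B x t) t - kernel2 a0 b0 t) <= eps)).
  { intros eps.
    assert (Heps' : 0 < Rmin d (eps / C))
      by (apply Rmin_glb_lt; [exact Hd|apply Rdiv_lt_0_compat; [apply cond_pos|exact HC]]).
    generalize (Hnear (mkposreal _ Heps')). apply filter_imp. intros x Hx t.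
    specialize (Hx t). simpl in Hx.
    pose proof (Rmin_l d (eps / C)). pose proof (Rmin_r d (eps / C)).
    assert (Hbound : C * (Rabs (A x t - a0) + Rabs (B x t - b0)) <= eps).
    { apply Rle_trans with (C * (eps / C)); [apply Rmult_le_compat_l; lra|].
      right. field. lra. }
    destruct (Hlip (A x t) (B x t) t) as (_ & H1 & H2); [lra|].
    split; lra. }
  split.
  - apply (filterlim_RInt_uniform F _ (kernel1 a0 b0)); [exact H2PI|apply is_RInt_kernel1, HD| |].
    + generalize Hint. apply filter_imp. tauto.
    + intros eps. generalize (Hclose eps). apply filter_imp. intros x Hx t _. apply Hx.
  - apply (filterlim_RInt_uniform F _ (kernel2 a0 b0)); [exact H2PI|apply is_RInt_kernel2, HD| |].
    + generalize Hint. apply filter_imp. tauto.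
    + intros eps. generalize (Hclose eps). apply filter_imp. intros x Hx t _. apply Hx.
Qed.

Lemma C1_on_near_small_circles (Omega : R * R -> Prop) (f : R -> R -> R) (x0 y0 : R) :
  open Omega -> C1_on Omega f -> Omega (x0, y0) -> forall eps : posreal,
  locally 0 (fun r => forall t, Omega (x0 + r * cos t, y0 + r * sin t) /\
                                Rabs (f (x0 + r * cos t) (y0 + r * sin t) - f x0 y0) < eps).
Proof.
  intros HO Hf Hp eps.
  apply (locally_small_circles (fun q => Omega q /\ Rabs (f (fst q) (snd q) - f x0 y0) < eps)).
  apply filter_and; [exact (HO _ Hp)|].
  apply (C1_on_continuous Omega f (x0, y0) HO Hf Hp (fun y => Rabs (y - f x0 y0) < eps)).
  exists eps. intros y Hy. exact Hy.
Qed.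

Theorem lemma5p7 (Omega : R * R -> Prop) (alpha beta : R -> R -> R)
  (HOmega : open Omega)
  (Halpha : C1_on Omega alpha) (Hbeta : C1_on Omega beta)
  (HDelta : forall x y : R, Omega (x, y) ->
              4 * alpha x y - (beta x y) ^ 2 > 0)
  (Hrigid : rigid Omega alpha beta)
  (xi eta : R) (Hzeta : Omega (xi, eta)) :
  filterlim (fun r : R => circle_int alpha beta (Zinv alpha beta xi eta) xi eta r)
    (at_right 0)
    (locally (2 * PI * fst (jA alpha beta xi eta),
              2 * PI * snd (jA alpha beta xi eta))).
Proof.
  set (A := fun r t => alpha (xi + r * cos t) (eta + r * sin t)).
  set (B := fun r t => beta (xi + r * cos t) (eta + r * sin t)).
  assert (Hnear : forall eps : posreal, at_right 0 (fun r => forall t,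
            Rabs (A r t - alpha xi eta) + Rabs (B r t - beta xi eta) < eps)).
  { intros eps. assert (Heps2 : 0 < eps / 2) by (apply Rdiv_lt_0_compat; [apply cond_pos|lra]).
    apply filter_le_within.
    generalize (filter_and _ _
      (C1_on_near_small_circles _ _ _ _ HOmega Halpha Hzeta (mkposreal _ Heps2))
      (C1_on_near_small_circles _ _ _ _ HOmega Hbeta Hzeta (mkposreal _ Heps2))).
    apply filter_imp. intros r [Ha Hb] t. simpl in Ha, Hb.
    destruct (Ha t) as [_ Ha']. destruct (Hb t) as [_ Hb']. unfold A, B. lra. }
  assert (Hcont : at_right 0 (fun r => forall t, continuous (A r) t /\ continuous (B r) t)).
  { apply filter_le_within.
    generalize (C1_on_near_small_circles _ _ _ _ HOmega Halpha Hzeta (mkposreal 1 Rlt_0_1)).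
    apply filter_imp. intros r Hr t. destruct (Hr t) as [Hin _].
    split; apply continuous_along_circle; eapply C1_on_continuous; eassumption. }
  destruct (filterlim_RInt_kernels (at_right 0) A B _ _ (HDelta _ _ Hzeta) Hnear Hcont)
    as [Hlim1 Hlim2].
  apply (filterlim_ext_loc (fun r => (RInt (fun t => kernel1 (A r t) (B r t) t) 0 (2 * PI),
                                      RInt (fun t => kernel2 (A r t) (B r t) t) 0 (2 * PI)))).
  - exists (mkposreal 1 Rlt_0_1). intros r _ Hr.
    symmetry. apply circle_int_Zinv. apply Rgt_not_eq, Hr.
  - apply (filterlim_locally_pair (at_right 0)); [exact Hlim1|exact Hlim2].
Qed.
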